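(* Let $\mathcal{C}_1=(C_1,E_1,\lambda_1)$ and $\mathcal{C}_2=(C_2,E_2,\lambda_2)$ be concept representation classes and let $(f,h)$ be a PC reduction from $\mathcal{C}_1$ to $\mathcal{C}_2$. If, for some concept $c\in C_1$ and some $n$, every set of labeled examples that uniquely characterizes $c$ in $\mathcal{C}_1$ has size at least $n$, then every set of labeled examples that uniquely characterizes $f(c)$ in $\mathcal{C}_2$ has size at least $n$.
   Context: A concept representation class is a triple $(C,E,\lambda)$ with $C$ a set of concepts, $E$ a set of examples, and $\lambda:C\to\mathcal{P}(E)$; concepts $c,c'$ are equivalent if $\lambda(c)=\lambda(c')$. A labeled example is a pair $(e,\mathrm{lab})$ with $e\in E$, $\mathrm{lab}\in\{0,1\}$; $c$ fits it if ($e\in\lambda(c)$ iff $\mathrm{lab}=1$). A set $S$ of labeled examples uniquely characterizes $c$ if $c$ fits all of $S$ and every concept fitting all of $S$ is equivalent to $c$. A PC reduction from $\mathcal{C}_1$ to $\mathcal{C}_2$ is a pair $(f,h)$ with $f:C_1\to C_2$ and $h:E_1\to E_2$ such that (i) for all $c\in C_1$, $e\in E_1$: $e\in\lambda_1(c)$ iff $h(e)\in\lambda_2(f(c))$; and (ii) for each $e\in E_2$, either $e\in\lambda_2(f(c))$ for all $c\in C_1$, or $e\in\lambda_2(f(c))$ for no $c\in C_1$, or there is $e'\in E_1$ with $\{c\in C_1\mid e\in\lambda_2(f(c))\}=\{c\in C_1\mid e'\in\lambda_1(c)\}$. *)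

From Stdlib Require Import List.
Import ListNotations.

(** A concept representation class (C, E, lambda), with lambda c viewed as
    the subset {e | lam c e} of E. *)
Record ConceptClass := {
  concept : Type;
  example : Type;
  lam : concept -> example -> Prop
}.

Definition equivalent (K : ConceptClass) (c c' : concept K) : Prop :=
  forall e, lam K c e <-> lam K c' e.

Definition labeled (K : ConceptClass) : Type := (example K * bool)%type.

Definition fits (K : ConceptClass) (c : concept K) (x : labeled K) : Prop :=
  lam K c (fst x) <-> snd x = true.

Definition labset (K : ConceptClass) : Type := labeled K -> Prop.

Definition uniquely_characterizes (K : ConceptClass) (S : labset K)
    (c : concept K) : Prop :=
  (forall x, S x -> fits K c x) /\
  (forall c', (forall x, S x -> fits K c' x) -> equivalent K c' c).

(** |S| >= n : S contains n pairwise distinct elements. *)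
Definition size_at_least {A : Type} (S : A -> Prop) (n : nat) : Prop :=
  exists l : list A, length l = n /\ NoDup l /\ forall x, In x l -> S x.

Definition PC_reduction (K1 K2 : ConceptClass)
    (f : concept K1 -> concept K2) (h : example K1 -> example K2) : Prop :=
  (forall c e, lam K1 c e <-> lam K2 (f c) (h e)) /\
  (forall e : example K2,
      (forall c, lam K2 (f c) e) \/
      (forall c, ~ lam K2 (f c) e) \/
      (exists e' : example K1, forall c, lam K2 (f c) e <-> lam K1 c e')).

(** Pull a set [S2] characterizing [f c] back along the reduction: every
    example [e2] of [S2] that is not constant on the image of [f] behaves on
    that image like some example [e1] of [C1]; choose one such [e1] and keep
    the label.  Constant examples carry no information about [f c'], so a
    concept [c'] fitting the pulled-back set has [f c'] fitting [S2], hence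
    [f c' ~ f c] and, by condition (i), [c' ~ c].  The pulled-back set is the
    image of [S2] under a partial function, so it is no larger than [S2]. *)

From Stdlib Require Import List ClassicalEpsilon.

Section PartialChoice.
Variables (A B : Type) (P : A -> B -> Prop).

Definition choose_opt (a : A) : option B :=
  match excluded_middle_informative (exists b, P a b) with
  | left ex => Some (proj1_sig (constructive_indefinite_description _ ex))
  | right _ => None
  end.

Lemma choose_opt_spec a b : choose_opt a = Some b -> P a b.
Proof.
  unfold choose_opt.
  destruct excluded_middle_informative as [ex | _]; [| discriminate].
  destruct (constructive_indefinite_description _ ex) as [b' Pb'].
  simpl; intros E; injection E as ->; exact Pb'.
Qed.

Lemma choose_opt_exists a b : P a b -> exists b', choose_opt a = Some b'.
Proof.
  intros Pab; unfold choose_opt.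
  destruct excluded_middle_informative as [ex | nex]; [now eexists |].
  exfalso; apply nex; now exists b.
Qed.

End PartialChoice.

Arguments choose_opt {A B} P a.
Arguments choose_opt_spec {A B P a b}.
Arguments choose_opt_exists {A B} P {a b}.

Section FunctionalCover.
Variables (A B : Type) (SA : A -> Prop) (SB : B -> Prop) (R : B -> A -> Prop).
Hypothesis R_functional : forall y x x', R y x -> R y x' -> x = x'.
Hypothesis SA_covered : forall x, SA x -> exists y, SB y /\ R y x.

Lemma NoDup_cover (l : list A) :
  NoDup l -> (forall x, In x l -> SA x) ->
  exists l', length l' = length l /\ NoDup l' /\
    forall y, In y l' -> SB y /\ exists x, R y x /\ In x l.
Proof.
  induction l as [| x l IH]; intros NDl inl.
  - exists nil; repeat split; [constructor | contradiction | contradiction].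
  - apply NoDup_cons_iff in NDl as [xnl NDl].
    destruct IH as [l' (len' & ND' & inl')]; auto with datatypes.
    destruct (SA_covered x) as [y [SBy Ryx]]; auto with datatypes.
    exists (y :: l'); split; [simpl; congruence | split].
    + constructor; [| exact ND'].
      intros yl'; destruct (inl' y yl') as [_ [z [Ryz zl]]].
      now rewrite (R_functional y x z Ryx Ryz) in xnl.
    + intros y' [<- | y'l'].
      * split; [exact SBy | exists x; auto with datatypes].
      * destruct (inl' y' y'l') as [SBy' [z [Ry'z zl]]].
        split; [exact SBy' | exists z; auto with datatypes].
Qed.

Lemma size_at_least_cover n : size_at_least SA n -> size_at_least SB n.
Proof.
  intros [l (len & NDl & inl)].
  destruct (NoDup_cover l NDl inl) as [l' (len' & ND' & inl')].
  exists l'; repeat split; [congruence | exact ND' | apply inl'].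
Qed.

End FunctionalCover.

Section Pullback.
Variables (K1 K2 : ConceptClass) (f : concept K1 -> concept K2)
  (h : example K1 -> example K2).
Hypothesis reduction : PC_reduction K1 K2 f h.

Definition represents (e2 : example K2) (e1 : example K1) : Prop :=
  forall c, lam K2 (f c) e2 <-> lam K1 c e1.

Definition pull (x : labeled K2) : option (labeled K1) :=
  option_map (fun e1 => (e1, snd x)) (choose_opt represents (fst x)).

Definition pullback (S2 : labset K2) : labset K1 :=
  fun x1 => exists x2, S2 x2 /\ pull x2 = Some x1.

Lemma fits_pull c x2 x1 :
  pull x2 = Some x1 -> fits K1 c x1 <-> fits K2 (f c) x2.
Proof.
  destruct x2 as [e2 b]; unfold pull, fits; simpl.
  destruct (choose_opt represents e2) as [e1 |] eqn:rep; [| discriminate].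
  intros E; injection E as <-; simpl.
  now rewrite (choose_opt_spec rep c).
Qed.

Lemma pullback_fits_image S2 c c' x2 :
  S2 x2 -> (forall x1, pullback S2 x1 -> fits K1 c' x1) ->
  fits K2 (f c) x2 -> fits K2 (f c') x2.
Proof.
  intros S2x2 fit' fitc; destruct x2 as [e2 b]; unfold fits in *; simpl in *.
  destruct (proj2 reduction e2) as [all | [none | [e1 rep]]].
  - rewrite <- fitc; split; intros _; apply all.
  - rewrite <- fitc; split; intros H; [destruct (none c' H) | destruct (none c H)].
  - destruct (choose_opt_exists represents rep) as [e1' rep'].
    assert (pulled : pull (e2, b) = Some (e1', b))
      by (unfold pull; simpl; now rewrite rep').
    apply (fits_pull c' _ _ pulled), fit'; now exists (e2, b).
Qed.

Lemma reduction_reflects_equivalent c c' :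
  equivalent K2 (f c') (f c) -> equivalent K1 c' c.
Proof.
  intros eqv e; rewrite !(proj1 reduction _ e); apply eqv.
Qed.

Lemma pullback_uniquely_characterizes S2 c :
  uniquely_characterizes K2 S2 (f c) ->
  uniquely_characterizes K1 (pullback S2) c.
Proof.
  intros [fit uniq]; split.
  - intros x1 [x2 [S2x2 pulled]]; apply (fits_pull c _ _ pulled), fit, S2x2.
  - intros c' fit'; apply reduction_reflects_equivalent, uniq.
    intros x2 S2x2; apply (pullback_fits_image S2 c); auto.
Qed.

Lemma size_at_least_pullback S2 n :
  size_at_least (pullback S2) n -> size_at_least S2 n.
Proof.
  apply size_at_least_cover with (R := fun x2 x1 => pull x2 = Some x1).
  - congruence.
  - intros x1 [x2 H]; now exists x2.
Qed.

End Pullback.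

Theorem propositionA5 (K1 K2 : ConceptClass)
    (f : concept K1 -> concept K2) (h : example K1 -> example K2)
    (Hred : PC_reduction K1 K2 f h) (c : concept K1) (n : nat)
    (Hlow : forall S : labset K1, uniquely_characterizes K1 S c -> size_at_least S n) :
  forall S : labset K2, uniquely_characterizes K2 S (f c) -> size_at_least S n.
Proof.
  intros S2 charS2.
  apply (size_at_least_pullback K1 K2 f), Hlow.
  exact (pullback_uniquely_characterizes K1 K2 f h Hred S2 c charS2).
Qed.
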